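(* Let $\mathbb{F}=\mathbb{R}$ or $\mathbb{C}$ and let $\{\mathcal{W}_i\}_{i=1}^n$ be a collection of $m$-dimensional subspaces of $\mathbb{F}^k$. Consider the collection of orthogonal complements $\{\mathcal{W}_i^\perp\}_{i=1}^n$, which are $(k-m)$-dimensional subspaces of $\mathbb{F}^k$. Then: (1) $\{\mathcal{W}_i\}_{i=1}^n$ is a tight fusion frame if and only if $\{\mathcal{W}_i^\perp\}_{i=1}^n$ is a tight fusion frame; (2) $\{\mathcal{W}_i\}_{i=1}^n$ is an equichordal tight fusion frame if and only if $\{\mathcal{W}_i^\perp\}_{i=1}^n$ is an equichordal tight fusion frame; (3) $\{\mathcal{W}_i\}_{i=1}^n$ is a strongly simplicial tight fusion frame if and only if $\{\mathcal{W}_i^\perp\}_{i=1}^n$ is a strongly simplicial tight fusion frame; (4) $\{\mathcal{W}_i\}_{i=1}^n$ is an orthoplectic Grassmannian packing if and only if $\{\mathcal{W}_i^\perp\}_{i=1}^n$ is an orthoplectic Grassmannian packing.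
   Context: For $d$-dimensional subspaces $\{\mathcal{V}_i\}_{i=1}^n$ of $\mathbb{F}^k$ let $L_i$ be a matrix whose columns form an orthonormal basis of $\mathcal{V}_i$ and $P_i=L_iL_i^*$. Chordal distance: $d_c(\mathcal{V}_i,\mathcal{V}_j)=[d-\operatorname{trace}(P_iP_j)]^{1/2}$. The collection is a tight fusion frame if $\sum_iP_i=AI_k$ for some $A>0$; equichordal if $\operatorname{trace}(L_i^*L_jL_j^*L_i)$ is the same for all $i\ne j$; strongly simplicial if $L_i^*L_jL_j^*L_i$ has the same set of eigenvalues for all $i\ne j$. Let $\mathcal{Z}(\mathbb{C},k)=k^2$, $\mathcal{Z}(\mathbb{R},k)=k(k+1)/2$. The collection is an orthoplectic Grassmannian packing if $\mathcal{Z}(\mathbb{F},k)<n\le 2(\mathcal{Z}(\mathbb{F},k)-1)$ and $\min_{i\ne j}d_c^2(\mathcal{V}_i,\mathcal{V}_j)=d(k-d)/k$. *)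

(* F = R or C is modelled inside a numeric closed field C
   (e.g. algC or complex R for R : rcfType): the complex case uses arbitrary
   matrices over C, the real case uses matrices all of whose entries are real. *)
From mathcomp Require Import all_boot all_order all_algebra.
Set Implicit Arguments. Unset Strict Implicit. Unset Printing Implicit Defensive.
Import Order.TTheory GRing.Theory Num.Theory.
Local Open Scope ring_scope.

Section FusionFrames.
Variable C : numClosedFieldType.

Definition adjmx (p q : nat) (A : 'M[C]_(p, q)) : 'M[C]_(q, p) :=
  (map_mx Num.conj A)^T.

Definition orthonormal_cols (k d : nat) (L : 'M[C]_(k, d)) : Prop :=
  adjmx L *m L = 1%:M.

Definition real_mx (p q : nat) (A : 'M[C]_(p, q)) : Prop :=
  forall i j, A i j \is Num.real.

Definition proj (k d : nat) (L : 'M[C]_(k, d)) : 'M[C]_k := L *m adjmx L.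

Definition chordal_dist2 (n k d : nat) (L : 'I_n -> 'M[C]_(k, d)) (i j : 'I_n) : C :=
  d%:R - \tr (proj (L i) *m proj (L j)).

Definition tight_fusion_frame (n k d : nat) (L : 'I_n -> 'M[C]_(k, d)) : Prop :=
  exists A : C, 0 < A /\ \sum_(i < n) proj (L i) = A%:M.

Definition cross_gram (n k d : nat) (L : 'I_n -> 'M[C]_(k, d)) (i j : 'I_n) : 'M[C]_d :=
  adjmx (L i) *m L j *m adjmx (L j) *m L i.

Definition equichordal (n k d : nat) (L : 'I_n -> 'M[C]_(k, d)) : Prop :=
  exists c : C, forall i j : 'I_n, i != j -> \tr (cross_gram L i j) = c.

(* same eigenvalues (with multiplicity) = same characteristic polynomial *)
Definition strongly_simplicial (n k d : nat) (L : 'I_n -> 'M[C]_(k, d)) : Prop :=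
  exists p : {poly C}, forall i j : 'I_n, i != j -> char_poly (cross_gram L i j) = p.

(* Z(F,k): k(k+1)/2 if F = R (realF = true), k^2 if F = C *)
Definition Zdim (realF : bool) (k : nat) : nat :=
  if realF then (k * k.+1)./2 else (k ^ 2)%N.

Definition orthoplectic_packing (realF : bool) (n k d : nat)
    (L : 'I_n -> 'M[C]_(k, d)) : Prop :=
  [/\ (Zdim realF k < n)%N, (n <= 2 * (Zdim realF k - 1))%N,
      (forall i j : 'I_n, i != j ->
          (d * (k - d))%:R / k%:R <= chordal_dist2 L i j) &
      (exists i j : 'I_n, i != j /\
          chordal_dist2 L i j = (d * (k - d))%:R / k%:R)].

End FusionFrames.

(* If L has orthonormal columns spanning W and M spans W^perp, then P_M = 1 - P_L.
   Hence the frame operator of the complements is (n - A) I when that of the W_i is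
   A I, and tr(P'_i P'_j) = k - 2m + tr(P_i P_j), so the complements have the same
   chordal distances.  For strong simpliciality, M_i^* P'_j M_i = 1 - D D^* with
   D = M_i^* L_j, and D^* D = 1 - L_j^* P_i L_j; Sylvester's identity
   X^a chi(D D^* ) = X^b chi(D^* D) expresses the characteristic polynomial of
   M_i^* P'_j M_i through that of L_i^* P_j L_i. *)
From mathcomp Require Import all_boot all_order all_algebra.
From mathcomp Require Import ring.
Set Implicit Arguments. Unset Strict Implicit. Unset Printing Implicit Defensive.
Import Order.TTheory GRing.Theory Num.Theory.
Local Open Scope ring_scope.

Section CharPoly.
Variable R : comNzRingType.

Lemma char_poly_mulmxC p q (A : 'M[R]_(p, q)) (B : 'M[R]_(q, p)) :
  'X^q * char_poly (A *m B) = 'X^p * char_poly (B *m A).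
Proof.
(* det N = det ('X - A B), and N [1, -A; 0, 'X] = ['X, 0; B, 'X - B A]. *)
rewrite /char_poly /char_poly_mx !map_mxM.
set A' := map_mx polyC A; set B' := map_mx polyC B.
pose N := block_mx ('X%:M : 'M_p) A' B' (1%:M : 'M_q).
have N_lu : N = block_mx 1%:M A' 0 1%:M *m block_mx ('X%:M - A' *m B') 0 B' 1%:M.
  by rewrite mulmx_block !mul1mx !mul0mx ?mulmx1 ?mulmx0 ?add0r ?addr0 ?subrK.
have N_ru : N *m block_mx 1%:M (- A') 0 'X%:M = block_mx 'X%:M 0 B' ('X%:M - B' *m A').
  rewrite mulmx_block !mulmx1 ?mulmx0 ?addr0 !mulmxN mul_scalar_mx [A' *m _]mul_mx_scalar.
  by rewrite -mul_scalar_mx addNr ?mul1mx ?scale1r addrC.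
have := congr1 determinant N_ru.
rewrite det_mulmx det_ublock det_lblock !det_scalar N_lu det_mulmx.
rewrite det_ublock det_lblock !det_scalar expr1n !mul1r ?mulr1 => <-.
by rewrite expr1n mul1r mulr1 mulrC.
Qed.

Definition onem_poly (d : nat) (p : {poly R}) : {poly R} := (-1) ^+ d * (p \Po (1 - 'X)).

Lemma char_poly_onem d (A : 'M[R]_d) :
  char_poly (1%:M - A) = onem_poly d (char_poly A).
Proof.
rewrite /onem_poly /char_poly -det_map_mx -detZ; congr (\det _).
apply/matrixP => i j; rewrite /char_poly_mx !mxE.
by case: (i == j); rewrite /= ?mulr1n ?mulr0n ?comp_polyB ?comp_polyX ?comp_polyC ?rmorphB /=
  ?polyC1 ?polyC0; ring.
Qed.

End CharPoly.

Lemma char_poly_mulmxC_square (R : idomainType) p (A B : 'M[R]_p) :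
  char_poly (A *m B) = char_poly (B *m A).
Proof.
apply: (@mulfI _ 'X^p); first by rewrite expf_neq0 // polyX_eq0.
exact: char_poly_mulmxC.
Qed.

Section Adjoint.
Variable C : numClosedFieldType.

Lemma adjmxM p q r (A : 'M[C]_(p, q)) (B : 'M[C]_(q, r)) :
  adjmx (A *m B) = adjmx B *m adjmx A.
Proof. by rewrite /adjmx map_mxM trmx_mul. Qed.

Lemma adjmxK p q (A : 'M[C]_(p, q)) : adjmx (adjmx A) = A.
Proof. by apply/matrixP => i j; rewrite /adjmx !mxE conjCK. Qed.

Lemma adjmx0 p q : adjmx (0 : 'M[C]_(p, q)) = 0.
Proof. by rewrite /adjmx map_mx0 trmx0. Qed.

Lemma adjmx_row_mx p q1 q2 (A : 'M[C]_(p, q1)) (B : 'M[C]_(p, q2)) :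
  adjmx (row_mx A B) = col_mx (adjmx A) (adjmx B).
Proof. by rewrite /adjmx map_row_mx tr_row_mx. Qed.

Lemma mxtrace_proj k d (L : 'M[C]_(k, d)) : orthonormal_cols L -> \tr (proj L) = d%:R.
Proof. by move=> oL; rewrite /proj mxtrace_mulC oL mxtrace1. Qed.

Lemma mxtrace_cross_gram n k d (L : 'I_n -> 'M[C]_(k, d)) i j :
  \tr (cross_gram L i j) = \tr (proj (L i) *m proj (L j)).
Proof. by rewrite /cross_gram /proj mxtrace_mulC !mulmxA. Qed.

Lemma cross_gramE n k d (L : 'I_n -> 'M[C]_(k, d)) i j :
  cross_gram L i j = adjmx (L i) *m proj (L j) *m L i.
Proof. by rewrite /cross_gram /proj !mulmxA. Qed.

Lemma cross_gram_adjmx n k d (L : 'I_n -> 'M[C]_(k, d)) i j :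
  cross_gram L i j = adjmx (L i) *m L j *m adjmx (adjmx (L i) *m L j).
Proof. by rewrite /cross_gram adjmxM adjmxK !mulmxA. Qed.

Lemma adjmx_onem_proj k c d (U : 'M[C]_(k, c)) (V : 'M[C]_(k, d)) :
  orthonormal_cols U ->
  adjmx U *m (1%:M - proj V) *m U = 1%:M - adjmx U *m V *m adjmx (adjmx U *m V).
Proof. by move=> oU; rewrite mulmxBr mulmxBl mulmx1 oU adjmxM adjmxK /proj !mulmxA. Qed.

(* [row_mx L M] is a square matrix with orthonormal columns, hence unitary. *)
Lemma proj_add_orthocompl k a b (L : 'M[C]_(k, a)) (M : 'M[C]_(k, b)) :
  (a + b = k)%N -> orthonormal_cols L -> orthonormal_cols M ->
  adjmx L *m M = 0 -> proj L + proj M = 1%:M.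
Proof.
move=> abk oL oM LM0; subst k.
have ML0 : adjmx M *m L = 0 by rewrite -[L]adjmxK -adjmxM LM0 adjmx0.
have /mulmx1C : adjmx (row_mx L M) *m row_mx L M = 1%:M.
  by rewrite adjmx_row_mx mul_col_row oL oM LM0 ML0 -scalar_mx_block.
by rewrite adjmx_row_mx mul_row_col.
Qed.

End Adjoint.

Section Complement.
Variables (C : numClosedFieldType) (n a b k : nat).
Variables (L : 'I_n -> 'M[C]_(k, a)) (M : 'I_n -> 'M[C]_(k, b)).
Hypotheses (oL : forall i, orthonormal_cols (L i)) (oM : forall i, orthonormal_cols (M i)).
Hypotheses (abk : (a + b = k)%N) (LM1 : forall i, proj (L i) + proj (M i) = 1%:M).

Lemma natr_dim_compl : k%:R = a%:R + b%:R :> C.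
Proof. by rewrite -natrD abk. Qed.

Lemma proj_compl i : proj (M i) = 1%:M - proj (L i).
Proof. by rewrite -(LM1 i) addrC addKr. Qed.

Lemma mxtrace_cross_gram_compl i j :
  \tr (cross_gram M i j) = b%:R - a%:R + \tr (cross_gram L i j).
Proof.
rewrite !mxtrace_cross_gram !proj_compl mulmxBl mulmxBr mulmxBr !mul1mx mulmx1.
rewrite !raddfB /= mxtrace1 !mxtrace_proj // natr_dim_compl; ring.
Qed.

Lemma chordal_dist2_compl i j : chordal_dist2 M i j = chordal_dist2 L i j.
Proof. by rewrite /chordal_dist2 -!mxtrace_cross_gram mxtrace_cross_gram_compl; ring. Qed.

Lemma equichordal_compl : equichordal L -> equichordal M.
Proof.
by case=> c trc; exists (b%:R - a%:R + c) => i j ij; rewrite mxtrace_cross_gram_compl trc.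
Qed.

Lemma tight_fusion_frame_compl : (0 < b)%N -> tight_fusion_frame L -> tight_fusion_frame M.
Proof.
move=> b_gt0 [A [A_gt0 sumL]].
have sumM : \sum_(i < n) proj (M i) = (n%:R - A)%:M.
  under eq_bigr do rewrite proj_compl.
  by rewrite sumrB sumL sumr_const card_ord raddfB raddfMn.
exists (n%:R - A); split=> //.
have trL : n%:R * a%:R = A * k%:R :> C.
  move/(congr1 mxtrace): sumL; rewrite mxtrace_scalar raddf_sum /=.
  under eq_bigr do rewrite mxtrace_proj //.
  by rewrite sumr_const card_ord mulr_natl mulr_natr.
have n_gt0 : (0 < n)%N.
  rewrite lt0n -(pnatr_eq0 C); apply/eqP => n0; move: trL.
  rewrite n0 mul0r => /esym/eqP; rewrite mulf_eq0 (gt_eqF A_gt0) pnatr_eq0 -abk addn_eq0.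
  by rewrite (gtn_eqF b_gt0) andbF.
have k_gt0 : 0 < k%:R :> C by rewrite ltr0n -abk addn_gt0 b_gt0 orbT.
have -> : n%:R - A = n%:R * b%:R / k%:R.
  by apply: (mulIf (lt0r_neq0 k_gt0)); rewrite divfK ?lt0r_neq0 // mulrBl -trL natr_dim_compl; ring.
by rewrite divr_gt0 // mulr_gt0 // ltr0n.
Qed.

Lemma char_poly_cross_gram_compl i j :
  char_poly (cross_gram M i j) =
  onem_poly b (('X^b * onem_poly a (char_poly (cross_gram L i j))) %/ 'X^a).
Proof.
pose D := adjmx (M i) *m L j.
have cgM : cross_gram M i j = 1%:M - D *m adjmx D.
  by rewrite cross_gramE proj_compl adjmx_onem_proj.
have DD : adjmx D *m D = 1%:M - cross_gram L j i.
  by rewrite cross_gram_adjmx -adjmx_onem_proj // -proj_compl /proj adjmxM adjmxK !mulmxA.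
have cgL : char_poly (cross_gram L j i) = char_poly (cross_gram L i j).
  by rewrite !cross_gram_adjmx !adjmxM !adjmxK char_poly_mulmxC_square.
rewrite cgM char_poly_onem -cgL -[onem_poly a _]char_poly_onem -DD -char_poly_mulmxC.
by rewrite mulKp // expf_neq0 // polyX_eq0.
Qed.

Lemma strongly_simplicial_compl : strongly_simplicial L -> strongly_simplicial M.
Proof.
case=> p cpL; exists (onem_poly b (('X^b * onem_poly a p) %/ 'X^a)) => i j ij.
by rewrite char_poly_cross_gram_compl cpL.
Qed.

Lemma orthoplectic_packing_compl realF :
  orthoplectic_packing realF L -> orthoplectic_packing realF M.
Proof.
rewrite /orthoplectic_packing.
have -> : (b * (k - b) = a * (k - a))%N by rewrite -abk addnK addKn mulnC.
case=> nlo nhi dist_ge [i [j [ij dist_eq]]]; split=> //.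
- by move=> i' j' ij'; rewrite chordal_dist2_compl dist_ge.
- by exists i, j; rewrite chordal_dist2_compl.
Qed.

End Complement.

Unset Implicit Arguments.

Theorem mainTheorem8 (C : numClosedFieldType) (realF : bool) (n k m : nat)
    (L : 'I_n -> 'M[C]_(k, m)) (M : 'I_n -> 'M[C]_(k, k - m)) :
  (0 < m)%N -> (m < k)%N ->
  (realF -> forall i, real_mx (L i) /\ real_mx (M i)) ->
  (forall i, orthonormal_cols (L i)) ->
  (forall i, orthonormal_cols (M i)) ->
  (forall i, adjmx (L i) *m M i = 0) ->
  [/\ tight_fusion_frame L <-> tight_fusion_frame M,
      equichordal L /\ tight_fusion_frame L <->
        equichordal M /\ tight_fusion_frame M,
      strongly_simplicial L /\ tight_fusion_frame L <->
        strongly_simplicial M /\ tight_fusion_frame M &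
      orthoplectic_packing realF L <-> orthoplectic_packing realF M].
Proof.
move=> m_gt0 lt_mk _ oL oM LM0.
have km_gt0 : (0 < k - m)%N by rewrite subn_gt0.
have abk : (m + (k - m) = k)%N by rewrite subnKC // ltnW.
have bak : (k - m + m = k)%N by rewrite addnC.
have LM1 i : proj (L i) + proj (M i) = 1%:M := proj_add_orthocompl abk (oL i) (oM i) (LM0 i).
have ML1 i : proj (M i) + proj (L i) = 1%:M by rewrite addrC.
have := tight_fusion_frame_compl oL abk LM1 km_gt0.
have := tight_fusion_frame_compl oM bak ML1 m_gt0.
have := equichordal_compl oL abk LM1.
have := equichordal_compl oM bak ML1.
have := strongly_simplicial_compl oL oM LM1.
have := strongly_simplicial_compl oM oL ML1.
have := orthoplectic_packing_compl oL abk LM1 (realF := realF).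
have := orthoplectic_packing_compl oM bak ML1 (realF := realF).
by split; tauto.
Qed.
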